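(* Let $\xi$ be a model and suppose the minimizer $\phi$ of $P_{0,\xi}$ on $\mathcal{C}$ is of the form $\phi(t)=m(1-t)+c$ with $m,c\in(0,\infty)$. Let $\eta(t)=\xi(1)-\int_t^1\int_0^s\phi(\tau)^{-2}d\tau\,ds$ be its formal conjugate. Then: (1) $m,c$ solve the system $$\xi(1)=\frac1m\Big(\frac1m\log\Big(\frac{c+m}{c}\Big)-\frac1{c+m}\Big),\qquad \frac1{\xi'(1)}=c(c+m);$$ (2) $\eta''(1)\ge\xi''(1)$; (3) $\eta''(0)\ge\xi''(0)$.
   Context: A model is $\xi(t)=\sum_{p\ge2}\beta_p^2t^p$, real $\beta_p$ not all zero, with $\xi(1+\epsilon)<\infty$ for some $\epsilon>0$. $\mathcal{C}$ is the set of $\phi\in C([0,1])$ with $\phi\ge0$, non-increasing and concave; $P_{0,\xi}(\phi)=\int_0^1(\xi''\phi+1/\phi)dx$. *)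

From Stdlib Require Import Reals.
From Coquelicot Require Import Coquelicot.
Open Scope R_scope.

Definition model_coef (beta : nat -> R) (n : nat) : R :=
  match n with 0%nat | 1%nat => 0 | _ => (beta n) ^ 2 end.

Definition xi (beta : nat -> R) (t : R) : R := PSeries (model_coef beta) t.

Definition is_model (beta : nat -> R) : Prop :=
  (exists p, (2 <= p)%nat /\ beta p <> 0) /\
  (exists eps, 0 < eps /\ ex_pseries (model_coef beta) (1 + eps)).

Definition in_C (phi : R -> R) : Prop :=
  (forall x, 0 <= x <= 1 ->
     filterlim phi (within (fun y => 0 <= y <= 1) (locally x)) (locally (phi x))) /\
  (forall x, 0 <= x <= 1 -> 0 <= phi x) /\
  (forall x y, 0 <= x <= 1 -> 0 <= y <= 1 -> x <= y -> phi y <= phi x) /\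
  (forall x y l, 0 <= x <= 1 -> 0 <= y <= 1 -> 0 <= l <= 1 ->
     l * phi x + (1 - l) * phi y <= phi (l * x + (1 - l) * y)).

Definition P0_integrand (f : R -> R) (phi : R -> R) (x : R) : R :=
  Derive_n f 2 x * phi x + / phi x.

(* P_{0,xi}(phi) is finite and equal to v: phi > 0 on [0,1) (otherwise phi
   vanishes on a nondegenerate interval and P = +oo) and the (possibly improper
   at 1) integral of the nonnegative integrand over [0,1] converges to v. *)
Definition P0_value (f : R -> R) (phi : R -> R) (v : R) : Prop :=
  (forall x, 0 <= x < 1 -> 0 < phi x) /\
  is_RInt_gen (P0_integrand f phi) (at_point 0) (at_left 1) v.

(* phi is the minimizer of P_{0,xi} on C (with P(psi) = +oo whenever it is
   not finite, such psi impose no constraint). *)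
Definition is_minimizer (f : R -> R) (phi : R -> R) : Prop :=
  in_C phi /\
  exists v, P0_value f phi v /\
    forall psi w, in_C psi -> P0_value f psi w -> v <= w.

Definition conj_eta (f : R -> R) (phi : R -> R) (t : R) : R :=
  f 1 - RInt (fun s => RInt (fun tau => / (phi tau) ^ 2) 0 s) t 1.

From Stdlib Require Import Reals Lra Psatz.
From Coquelicot Require Import Coquelicot.
Open Scope R_scope.

(* Write phi0 t = m (1 - t) + c.  For h among 1, -1, 1 - t, -(1 - t), -(t - a)_+
   and -(a - t)_+, the profile phi0 + e h stays nonnegative, nonincreasing and
   concave for small e > 0, and convexity of 1/x gives
   P(phi0 + e h) <= P(phi0) + e * int (xi'' - phi0^-2) h + O(e^2).
   Minimality of phi0 thus makes int (xi'' - phi0^-2) h nonnegative for these h.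
   The four affine directions give int (xi'' - phi0^-2) = 0 and
   int (xi'' - phi0^-2) (1 - t) = 0, which by Taylor's formula at 0
   (xi(0) = xi'(0) = 0) are the two equations of (1).  The ramps, concentrated
   near t = 1 or near t = 0, force xi'' <= phi0^-2 at the endpoints, while
   eta'' = phi0^-2; this is (2) and (3). *)

(* [RInt] takes values in the carrier of a normed module, which [ring] and
   [field] do not recognise as [R] until the equation is retyped. *)
Ltac in_R := match goal with |- ?u = ?v => change (@eq R u v) end.

Lemma continuous_Rconst (k x : R) : continuous (fun _ : R => k) x.
Proof. apply (@continuous_const R_UniformSpace R_UniformSpace). Qed.

Lemma continuous_Rplus_comp (f g : R -> R) (x : R) :
  continuous f x -> continuous g x -> continuous (fun y => f y + g y) x.
Proof. apply (@continuous_plus R_UniformSpace R_AbsRing R_NormedModule). Qed.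

Lemma continuous_Ropp_comp (f : R -> R) (x : R) :
  continuous f x -> continuous (fun y => - f y) x.
Proof. apply (@continuous_opp R_UniformSpace R_AbsRing R_NormedModule). Qed.

Lemma continuous_Rminus_comp (f g : R -> R) (x : R) :
  continuous f x -> continuous g x -> continuous (fun y => f y - g y) x.
Proof. apply (@continuous_minus R_UniformSpace R_AbsRing R_NormedModule). Qed.

Lemma continuous_Rmult_comp (f g : R -> R) (x : R) :
  continuous f x -> continuous g x -> continuous (fun y => f y * g y) x.
Proof. apply (@continuous_mult R_UniformSpace R_AbsRing). Qed.

Lemma continuous_gt_near (g : R -> R) (x s : R) :
  continuous g x -> s < g x -> exists d, 0 < d /\ forall y, Rabs (y - x) < d -> s < g y.
Proof.
  intros Hg Hs.
  assert (Hnear : locally (g x) (fun z => s < z)).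
  { assert (He : 0 < g x - s) by lra.
    exists (mkposreal _ He). intros z Hz.
    change (Rabs (z - g x) < g x - s) in Hz. apply Rabs_def2 in Hz. lra. }
  destruct (Hg _ Hnear) as [d Hd].
  exists d. split; [apply cond_pos | intros y Hy; exact (Hd y Hy)].
Qed.

Lemma continuous_bounded_on (g : R -> R) (a b : R) : a <= b ->
  (forall x, a <= x <= b -> continuous g x) ->
  exists M, forall x, a <= x <= b -> Rabs (g x) <= M.
Proof.
  intros Hab Hg.
  destruct (continuity_ab_maj (fun x => Rabs (g x)) a b Hab) as [x0 [Hx0 _]].
  - intros x Hx. apply continuity_pt_filterlim, continuous_Rabs_comp, Hg, Hx.
  - exists (Rabs (g x0)). exact Hx0.
Qed.

Lemma ex_RInt_continuous_le (g : R -> R) (a b : R) : a <= b ->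
  (forall x, a <= x <= b -> continuous g x) -> ex_RInt g a b.
Proof.
  intros Hab Hg. apply (@ex_RInt_continuous R_CompleteNormedModule).
  rewrite Rmin_left, Rmax_right by exact Hab. exact Hg.
Qed.

Lemma locally_open_interval (lo hi x : R) : lo < x < hi -> locally x (fun y => lo < y < hi).
Proof. intros Hx. exact (open_and _ _ (open_gt lo) (open_lt hi) x Hx). Qed.

Lemma ex_RInt_open_interval (g : R -> R) (lo hi u v : R) :
  (forall x, lo < x < hi -> continuous g x) -> lo < u < hi -> lo < v < hi -> ex_RInt g u v.
Proof.
  intros Hg Hu Hv. apply (@ex_RInt_continuous R_CompleteNormedModule).
  intros z Hz. apply Hg. split.
  - apply Rlt_le_trans with (Rmin u v); [apply Rmin_glb_lt; lra | apply Hz].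
  - apply Rle_lt_trans with (Rmax u v); [apply Hz | apply Rmax_lub_lt; lra].
Qed.

Lemma is_derive_RInt_open_interval (g : R -> R) (lo hi a : R) : lo < a < hi ->
  (forall x, lo < x < hi -> continuous g x) ->
  forall s, lo < s < hi -> is_derive (RInt g a) s (g s).
Proof.
  intros Ha Hg s Hs.
  apply (is_derive_RInt g (RInt g a) a s); [| apply Hg, Hs].
  apply (filter_imp (fun y => lo < y < hi)); [| apply locally_open_interval, Hs].
  intros y Hy. apply (@RInt_correct R_CompleteNormedModule).
  exact (ex_RInt_open_interval g lo hi a y Hg Ha Hy).
Qed.

Lemma RInt_Rplus (f g : R -> R) (a b : R) : ex_RInt f a b -> ex_RInt g a b ->
  RInt (fun x => f x + g x) a b = RInt f a b + RInt g a b.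
Proof. intros Hf Hg. exact (RInt_plus f g a b Hf Hg). Qed.

Lemma RInt_Rscal (f : R -> R) (k a b : R) : ex_RInt f a b ->
  RInt (fun x => k * f x) a b = k * RInt f a b.
Proof. intros Hf. exact (RInt_scal f a b k Hf). Qed.

Lemma RInt_Rconst (k a b : R) : RInt (fun _ => k) a b = (b - a) * k.
Proof. exact (RInt_const a b k). Qed.

Lemma RInt_Rminus (f g : R -> R) (a b : R) : ex_RInt f a b -> ex_RInt g a b ->
  RInt (fun x => f x - g x) a b = RInt f a b - RInt g a b.
Proof. intros Hf Hg. exact (RInt_minus f g a b Hf Hg). Qed.

Lemma RInt_Ropp (f : R -> R) (a b : R) : ex_RInt f a b ->
  RInt (fun x => - f x) a b = - RInt f a b.
Proof. intros Hf. exact (RInt_opp f a b Hf). Qed.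

Lemma RInt_Rplus_scal_const (A B : R -> R) (e K a b : R) : ex_RInt A a b -> ex_RInt B a b ->
  RInt (fun x => A x + e * B x + K) a b = RInt A a b + e * RInt B a b + (b - a) * K.
Proof.
  intros HA HB.
  assert (HeB : ex_RInt (fun x => e * B x) a b) by exact (ex_RInt_scal B a b e HB).
  rewrite RInt_Rplus, RInt_Rplus, RInt_Rscal, RInt_Rconst; try assumption.
  - reflexivity.
  - exact (ex_RInt_plus A _ a b HA HeB).
  - exact (ex_RInt_const a b K).
Qed.

Lemma RInt_weight_ge (g k : R -> R) (s : R) :
  (forall x, 0 <= x <= 1 -> continuous g x /\ continuous k x /\ 0 <= k x) ->
  (forall x, 0 <= x <= 1 -> 0 < k x -> s <= g x) ->
  s * RInt k 0 1 <= RInt (fun x => g x * k x) 0 1.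
Proof.
  intros Hgk Hs.
  assert (Hk : ex_RInt k 0 1) by (apply ex_RInt_continuous_le; [lra | apply Hgk]).
  rewrite <- RInt_Rscal by exact Hk.
  apply RInt_le; [lra | | |].
  - apply (ex_RInt_scal (V := R_CompleteNormedModule)). exact Hk.
  - apply ex_RInt_continuous_le; [lra |]. intros x Hx. destruct (Hgk x Hx) as [Hg [Hc _]].
    apply continuous_Rmult_comp; assumption.
  - intros x Hx. destruct (Hgk x ltac:(lra)) as [_ [_ Hk0]].
    destruct Hk0 as [Hkpos | Hk0].
    + apply Rmult_le_compat_r; [lra | apply Hs; lra].
    + rewrite <- Hk0. lra.
Qed.

Lemma filter_prod_at_point_at_left (a b : R) (P : R * R -> Prop) : a < b ->
  (forall y, a < y < b -> P (a, y)) -> filter_prod (at_point a) (at_left b) P.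
Proof.
  intros Hab HP.
  apply (Filter_prod _ _ _ (fun x => x = a) (fun y => a < y < b)).
  - reflexivity.
  - assert (Hd : 0 < b - a) by lra.
    exists (mkposreal _ Hd). intros y Hy Hyb.
    change (Rabs (y - b) < b - a) in Hy. apply Rabs_def2 in Hy. lra.
  - intros x y -> Hy. exact (HP y Hy).
Qed.

(* Only continuity on [a, b] is assumed, so the convergence of [RInt g a y]
   as [y] tends to [b] comes from a uniform bound on [g]. *)
Lemma is_RInt_gen_at_left_RInt (g : R -> R) (a b : R) : a < b ->
  (forall x, a <= x <= b -> continuous g x) ->
  is_RInt_gen g (at_point a) (at_left b) (RInt g a b).
Proof.
  intros Hab Hg.
  destruct (continuous_bounded_on g a b (Rlt_le _ _ Hab) Hg) as [M HM].
  assert (HM0 : 0 <= M) by (apply Rle_trans with (Rabs (g a)); [apply Rabs_pos | apply HM; lra]).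
  assert (Hex : forall y, a <= y <= b -> ex_RInt g a y /\ ex_RInt g y b).
  { intros y Hy. split; apply ex_RInt_continuous_le; try lra; intros x Hx; apply Hg; lra. }
  apply (filterlimi_lim_ext_loc (fun ab => RInt g (fst ab) (snd ab))).
  { apply filter_prod_at_point_at_left; [exact Hab |].
    intros y Hy. apply (@RInt_correct R_CompleteNormedModule). exact (proj1 (Hex y ltac:(lra))). }
  apply filterlim_locally. intros eps.
  set (d := Rmin (b - a) (eps / (M + 1))).
  assert (Hd : 0 < d) by (apply Rmin_glb_lt; [lra | apply Rdiv_lt_0_compat; [apply cond_pos | lra]]).
  apply (Filter_prod _ _ _ (fun x => x = a) (fun y => b - d < y < b)).
  - reflexivity.
  - exists (mkposreal _ Hd). intros y Hy Hyb.
    change (Rabs (y - b) < d) in Hy. apply Rabs_def2 in Hy. lra.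
  - intros x y -> Hy. simpl.
    assert (Hda : d <= b - a) by apply Rmin_l.
    assert (Hde : d * (M + 1) <= eps).
    { apply Rle_trans with (eps / (M + 1) * (M + 1)).
      - apply Rmult_le_compat_r; [lra | apply Rmin_r].
      - right. field. lra. }
    destruct (Hex y ltac:(lra)) as [Hay Hyb].
    rewrite <- (RInt_Chasles g a y b Hay Hyb).
    change (Rabs (RInt g a y - (RInt g a y + RInt g y b)) < eps).
    replace (RInt g a y - (RInt g a y + RInt g y b)) with (- RInt g y b) by ring.
    rewrite Rabs_Ropp.
    apply Rle_lt_trans with ((b - y) * M).
    + apply abs_RInt_le_const; [lra | exact Hyb | intros t Ht; apply HM; lra].
    + pose proof (cond_pos eps). nra.
Qed.

(* Second-order Taylor bound for [1/x], from
   [/ (p + d) - / p + d / p ^ 2 = d ^ 2 / (p ^ 2 * (p + d))]. *)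
Lemma Rinv_perturbation_le (c p k e : R) : 0 < c <= p -> c / 2 <= p + e * k -> Rabs k <= 1 ->
  / (p + e * k) <= / p - e * (/ p ^ 2 * k) + e ^ 2 * (2 / c ^ 3).
Proof.
  intros Hp Hq Hk.
  assert (Hid : / (p + e * k) - / p + e * (/ p ^ 2 * k) = (e * k) ^ 2 * / (p ^ 2 * (p + e * k)))
    by (field; lra).
  assert (Hden : / (p ^ 2 * (p + e * k)) <= 2 / c ^ 3).
  { replace (2 / c ^ 3) with (/ (c ^ 2 * (c / 2))) by (field; lra).
    apply Rinv_le_contravar; [apply Rmult_lt_0_compat; [apply pow_lt |]; lra |].
    apply Rmult_le_compat; try lra; [apply pow_le; lra | apply pow_incr; lra]. }
  assert (Hk2 : (e * k) ^ 2 <= e ^ 2).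
  { assert (k ^ 2 <= 1) by (rewrite <- (pow2_abs k); pose proof (Rabs_pos k); nra).
    rewrite Rpow_mult_distr. pose proof (pow2_ge_0 e). nra. }
  assert (0 <= 2 / c ^ 3) by (apply Rlt_le, Rdiv_lt_0_compat; [lra | apply pow_lt; lra]).
  pose proof (pow2_ge_0 (e * k)).
  assert ((e * k) ^ 2 * / (p ^ 2 * (p + e * k)) <= (e * k) ^ 2 * (2 / c ^ 3))
    by (apply Rmult_le_compat_l; lra).
  nra.
Qed.

Lemma nonneg_of_small_perturbations (I K e0 : R) : 0 < e0 ->
  (forall e, 0 < e < e0 -> 0 <= e * I + e ^ 2 * K) -> 0 <= I.
Proof.
  intros He0 Hsmall.
  destruct (Rle_or_lt 0 I) as [HI | HI]; [exact HI | exfalso].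
  set (L := Rabs K + 1).
  assert (HL : 0 < L) by (unfold L; pose proof (Rabs_pos K); lra).
  set (e := Rmin (e0 / 2) (- I / (2 * L))).
  assert (He : 0 < e) by (apply Rmin_glb_lt; [lra | apply Rdiv_lt_0_compat; lra]).
  assert (HeL : e * L <= - I / 2).
  { apply Rle_trans with (- I / (2 * L) * L); [apply Rmult_le_compat_r; [lra | apply Rmin_r] |].
    right. field. lra. }
  assert (HK : e * K <= e * L) by (apply Rmult_le_compat_l; [lra |]; unfold L; pose proof (Rle_abs K); lra).
  assert (He0' : e <= e0 / 2) by apply Rmin_l.
  specialize (Hsmall e ltac:(lra)).
  nra.
Qed.

Definition ramp (a x : R) : R := Rmax 0 (x - a).

Definition ramp_left (a x : R) : R := Rmax 0 (a - x).

Lemma ramp_nonneg (a x : R) : 0 <= ramp a x.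
Proof. apply Rmax_l. Qed.

Lemma ramp_le_compat (a x y : R) : x <= y -> ramp a x <= ramp a y.
Proof.
  intros Hxy. apply Rmax_lub; [apply Rmax_l |].
  apply Rle_trans with (y - a); [lra | apply Rmax_r].
Qed.

Lemma ramp_convex (a x y l : R) : 0 <= l <= 1 ->
  ramp a (l * x + (1 - l) * y) <= l * ramp a x + (1 - l) * ramp a y.
Proof.
  intros Hl. unfold ramp.
  pose proof (Rmax_l 0 (x - a)). pose proof (Rmax_r 0 (x - a)).
  pose proof (Rmax_l 0 (y - a)). pose proof (Rmax_r 0 (y - a)).
  apply Rmax_lub; nra.
Qed.

Lemma ramp_pos_gt (a x : R) : 0 < ramp a x -> a < x.
Proof. unfold ramp, Rmax. destruct (Rle_dec 0 (x - a)); lra. Qed.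

Lemma ramp_left_pos_lt (a x : R) : 0 < ramp_left a x -> x < a.
Proof. unfold ramp_left, Rmax. destruct (Rle_dec 0 (a - x)); lra. Qed.

Lemma ramp_left_eq (a x : R) : ramp_left a x = (a - x) + ramp a x.
Proof.
  unfold ramp_left, ramp, Rmax.
  destruct (Rle_dec 0 (a - x)), (Rle_dec 0 (x - a)); lra.
Qed.

Lemma continuous_ramp (a x : R) : continuous (ramp a) x.
Proof.
  apply (continuous_ext (fun y => ((y - a) + Rabs (y - a)) * / 2)).
  - intros y. change (((y - a) + Rabs (y - a)) * / 2 = Rmax 0 (y - a)).
    unfold Rmax. destruct (Rle_dec 0 (y - a)).
    + rewrite Rabs_pos_eq by lra. field.
    + rewrite Rabs_left by lra. field.
  - apply continuous_Rmult_comp; [| apply continuous_Rconst].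
    assert (Hlin : continuous (fun y => y - a) x).
    { apply continuous_Rminus_comp; [apply (@continuous_id R_UniformSpace) | apply continuous_Rconst]. }
    apply continuous_Rplus_comp; [exact Hlin | exact (continuous_Rabs_comp _ x Hlin)].
Qed.

Lemma continuous_ramp_left (a x : R) : continuous (ramp_left a) x.
Proof.
  apply (continuous_ext (fun y => (a - y) + ramp a y)); [intros y; symmetry; apply ramp_left_eq |].
  apply continuous_Rplus_comp; [| apply continuous_ramp].
  apply continuous_Rminus_comp; [apply continuous_Rconst | apply (@continuous_id R_UniformSpace)].
Qed.

Lemma RInt_ramp (a : R) : 0 <= a <= 1 -> RInt (ramp a) 0 1 = (1 - a) ^ 2 / 2.
Proof.
  intros Ha.
  assert (Hex : forall u v, u <= v -> ex_RInt (ramp a) u v)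
    by (intros u v Huv; apply ex_RInt_continuous_le; [exact Huv | intros; apply continuous_ramp]).
  rewrite <- (RInt_Chasles (ramp a) 0 a 1) by (apply Hex; lra).
  rewrite (RInt_ext (ramp a) (fun _ => 0) 0 a).
  2:{ intros x Hx. rewrite Rmin_left, Rmax_right in Hx by lra. unfold ramp. apply Rmax_left. lra. }
  rewrite (RInt_ext (ramp a) (fun x => x - a) a 1).
  2:{ intros x Hx. rewrite Rmin_left, Rmax_right in Hx by lra. unfold ramp. apply Rmax_right. lra. }
  rewrite (is_RInt_unique (fun x => x - a) a 1 ((1 - a) ^ 2 / 2 - (a - a) ^ 2 / 2)).
  - rewrite RInt_Rconst.
    change ((a - 0) * 0 + ((1 - a) ^ 2 / 2 - (a - a) ^ 2 / 2) = (1 - a) ^ 2 / 2). field.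
  - apply (is_RInt_derive (fun x => (x - a) ^ 2 / 2)).
    + intros x _. auto_derive; [exact I | field].
    + intros x _. apply continuous_Rminus_comp; [apply (@continuous_id R_UniformSpace) | apply continuous_Rconst].
Qed.

Lemma RInt_ramp_left (a : R) : 0 <= a <= 1 -> RInt (ramp_left a) 0 1 = a ^ 2 / 2.
Proof.
  intros Ha.
  assert (Hlin : forall x, continuous (fun y => a - y) x)
    by (intros x; apply continuous_Rminus_comp; [apply continuous_Rconst | apply (@continuous_id R_UniformSpace)]).
  rewrite (RInt_ext _ (fun x => (a - x) + ramp a x)) by (intros x _; apply ramp_left_eq).
  rewrite RInt_Rplus, RInt_ramp; [| exact Ha | |].
  2: apply ex_RInt_continuous_le; [lra | intros; apply Hlin].
  2: apply ex_RInt_continuous_le; [lra | intros; apply continuous_ramp].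
  assert (Haff : RInt (Rminus a) 0 1 = a - 1 / 2).
  { apply is_RInt_unique.
    replace (a - 1 / 2) with ((a * 1 - 1 ^ 2 / 2) - (a * 0 - 0 ^ 2 / 2)) by field.
    apply (is_RInt_derive (fun x => a * x - x ^ 2 / 2)); [| intros; apply Hlin].
    intros x _. auto_derive; [exact I | field]. }
  rewrite Haff. in_R. field.
Qed.

Lemma nonpos_at_1_of_ramp_moments (g : R -> R) :
  (forall x, 0 <= x <= 1 -> continuous g x) ->
  (forall a, 0 <= a <= 1 -> RInt (fun x => g x * ramp a x) 0 1 <= 0) -> g 1 <= 0.
Proof.
  intros Hg Hmom.
  destruct (Rle_or_lt (g 1) 0) as [H | H]; [exact H | exfalso].
  destruct (continuous_gt_near g 1 (g 1 / 2) (Hg 1 ltac:(lra)) ltac:(lra)) as [d [Hd Hnear]].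
  set (a := Rmax 0 (1 - d / 2)).
  assert (Ha0 : 0 <= a) by apply Rmax_l.
  assert (Had : 1 - d / 2 <= a) by apply Rmax_r.
  assert (Ha1 : a < 1) by (apply Rmax_lub_lt; lra).
  assert (Hw : g 1 / 2 * RInt (ramp a) 0 1 <= RInt (fun x => g x * ramp a x) 0 1).
  { apply RInt_weight_ge.
    - intros x Hx. repeat split; [apply Hg, Hx | apply continuous_ramp | apply ramp_nonneg].
    - intros x Hx Hk. apply ramp_pos_gt in Hk. apply Rlt_le, Hnear.
      rewrite Rabs_left1; lra. }
  rewrite RInt_ramp in Hw by lra.
  specialize (Hmom a ltac:(lra)).
  assert (0 < (1 - a) ^ 2) by (apply pow_lt; lra).
  nra.
Qed.

Lemma nonpos_at_0_of_ramp_moments (g : R -> R) :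
  (forall x, 0 <= x <= 1 -> continuous g x) ->
  (forall a, 0 <= a <= 1 -> RInt (fun x => g x * ramp_left a x) 0 1 <= 0) -> g 0 <= 0.
Proof.
  intros Hg Hmom.
  destruct (Rle_or_lt (g 0) 0) as [H | H]; [exact H | exfalso].
  destruct (continuous_gt_near g 0 (g 0 / 2) (Hg 0 ltac:(lra)) ltac:(lra)) as [d [Hd Hnear]].
  set (a := Rmin 1 (d / 2)).
  assert (Ha1 : a <= 1) by apply Rmin_l.
  assert (Had : a <= d / 2) by apply Rmin_r.
  assert (Ha0 : 0 < a) by (apply Rmin_glb_lt; lra).
  assert (Hw : g 0 / 2 * RInt (ramp_left a) 0 1 <= RInt (fun x => g x * ramp_left a x) 0 1).
  { apply RInt_weight_ge.
    - intros x Hx. repeat split; [apply Hg, Hx | apply continuous_ramp_left | apply Rmax_l].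
    - intros x Hx Hk. apply ramp_left_pos_lt in Hk. apply Rlt_le, Hnear.
      rewrite Rminus_0_r, Rabs_pos_eq; lra. }
  rewrite RInt_ramp_left in Hw by lra.
  specialize (Hmom a ltac:(lra)).
  assert (0 < a ^ 2) by (apply pow_lt; lra).
  nra.
Qed.

Definition admissible (psi : R -> R) : Prop :=
  in_C psi /\ forall x, 0 <= x <= 1 -> continuous psi x /\ 0 < psi x.

(* Affine part plus a concave kink at [a]: every perturbation of the affine
   minimizer used below is of this shape. *)
Definition ramp_profile (A B g a x : R) : R := A * (1 - x) + B - g * ramp a x.

Lemma continuous_ramp_profile (A B g a x : R) : continuous (ramp_profile A B g a) x.
Proof.
  apply continuous_Rminus_comp; [apply continuous_Rplus_comp |].
  - apply continuous_Rmult_comp; [apply continuous_Rconst |].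
    apply continuous_Rminus_comp; [apply continuous_Rconst | apply (@continuous_id R_UniformSpace)].
  - apply continuous_Rconst.
  - apply continuous_Rmult_comp; [apply continuous_Rconst | apply continuous_ramp].
Qed.

Lemma ramp_profile_admissible (A B g a : R) (psi : R -> R) :
  0 <= A -> 0 <= g -> 0 <= a <= 1 -> g * (1 - a) < B ->
  (forall x, psi x = ramp_profile A B g a x) -> admissible psi.
Proof.
  intros HA Hg Ha HB Hpsi.
  assert (Hc : forall x, continuous psi x).
  { intros x. apply (continuous_ext (ramp_profile A B g a)); [intros y; auto | apply continuous_ramp_profile]. }
  assert (Hpos : forall x, 0 <= x <= 1 -> 0 < psi x).
  { intros x Hx. rewrite Hpsi. unfold ramp_profile.
    assert (ramp a x <= 1 - a) by (apply Rmax_lub; lra).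
    nra. }
  split; [| intros x Hx; split; [apply Hc | apply Hpos, Hx]].
  split; [| split; [| split]].
  - intros x _. apply (filterlim_filter_le_1 (F := locally x)); [apply filter_le_within | apply Hc].
  - intros x Hx. left. apply Hpos, Hx.
  - intros x y _ _ Hxy. rewrite !Hpsi. unfold ramp_profile.
    pose proof (ramp_le_compat a x y Hxy). nra.
  - intros x y l _ _ Hl. rewrite !Hpsi. unfold ramp_profile.
    pose proof (ramp_convex a x y l Hl). nra.
Qed.

Definition P0 (f psi : R -> R) : R := RInt (P0_integrand f psi) 0 1.

Section FirstVariation.

Variable f : R -> R.
Hypothesis f2_cont : forall x, 0 <= x <= 1 -> continuous (Derive_n f 2) x.

Lemma continuous_P0_integrand (psi : R -> R) (x : R) : 0 <= x <= 1 ->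
  continuous psi x -> psi x <> 0 -> continuous (P0_integrand f psi) x.
Proof.
  intros Hx Hc Hnz. apply continuous_Rplus_comp.
  - apply continuous_Rmult_comp; [apply f2_cont, Hx | exact Hc].
  - apply continuous_Rinv_comp; [exact Hc | exact Hnz].
Qed.

Lemma P0_value_admissible (psi : R -> R) : admissible psi -> P0_value f psi (P0 f psi).
Proof.
  intros [_ Hpsi]. split.
  - intros x Hx. apply Hpsi. lra.
  - apply is_RInt_gen_at_left_RInt; [lra |].
    intros x Hx. destruct (Hpsi x Hx) as [Hc Hpos].
    apply continuous_P0_integrand; [exact Hx | exact Hc | lra].
Qed.

Lemma minimizer_P0_le (phi phi0 : R -> R) :
  is_minimizer f phi -> (forall t, 0 <= t <= 1 -> phi t = phi0 t) -> admissible phi0 ->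
  forall psi, admissible psi -> P0 f phi0 <= P0 f psi.
Proof.
  intros [_ [v [[_ Hv] Hmin]]] Hphi Hphi0 psi Hpsi.
  assert (Hv0 : is_RInt_gen (P0_integrand f phi0) (at_point 0) (at_left 1) v).
  { apply is_RInt_gen_ext with (2 := Hv).
    apply filter_prod_at_point_at_left; [lra |].
    intros y Hy x Hx. simpl in Hx. rewrite Rmin_left, Rmax_right in Hx by lra.
    unfold P0_integrand. rewrite Hphi by lra. reflexivity. }
  replace (P0 f phi0) with v.
  - apply (Hmin psi); [apply Hpsi | apply P0_value_admissible, Hpsi].
  - destruct (P0_value_admissible phi0 Hphi0) as [_ H0].
    rewrite <- (is_RInt_gen_unique _ _ Hv0). exact (is_RInt_gen_unique _ _ H0).
Qed.

Lemma P0_perturbation_le (phi0 h : R -> R) (c e : R) :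
  0 < c -> (forall x, 0 <= x <= 1 -> continuous phi0 x /\ c <= phi0 x) ->
  (forall x, 0 <= x <= 1 -> continuous h x /\ Rabs (h x) <= 1) ->
  0 < e <= c / 2 ->
  P0 f (fun x => phi0 x + e * h x) <=
  P0 f phi0 + e * RInt (fun x => (Derive_n f 2 x - / phi0 x ^ 2) * h x) 0 1 + e ^ 2 * (2 / c ^ 3).
Proof.
  intros Hc Hphi Hh He.
  set (psi := fun x => phi0 x + e * h x).
  set (Dh := fun x => (Derive_n f 2 x - / phi0 x ^ 2) * h x).
  assert (Hpsi : forall x, 0 <= x <= 1 -> continuous psi x /\ c / 2 <= psi x).
  { intros x Hx. destruct (Hphi x Hx) as [Hc0 H0]. destruct (Hh x Hx) as [Hch Hb].
    split.
    - apply continuous_Rplus_comp; [exact Hc0 |].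
      apply continuous_Rmult_comp; [apply continuous_Rconst | exact Hch].
    - unfold psi. apply Rabs_le_between in Hb. nra. }
  assert (HDh : forall x, 0 <= x <= 1 -> continuous Dh x).
  { intros x Hx. destruct (Hphi x Hx) as [Hc0 H0].
    apply continuous_Rmult_comp; [| apply Hh, Hx].
    apply continuous_Rminus_comp; [apply f2_cont, Hx |].
    apply continuous_Rinv_comp; [| apply pow_nonzero; lra].
    apply continuous_Rmult_comp; [exact Hc0 |].
    apply continuous_Rmult_comp; [exact Hc0 | apply continuous_Rconst]. }
  assert (Hphi0 : forall x, 0 <= x <= 1 -> continuous (P0_integrand f phi0) x).
  { intros x Hx. destruct (Hphi x Hx) as [Hc0 H0].
    apply continuous_P0_integrand; [exact Hx | exact Hc0 | lra]. }
  fold Dh.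
  replace (P0 f phi0 + e * RInt Dh 0 1 + e ^ 2 * (2 / c ^ 3))
    with (RInt (fun x => P0_integrand f phi0 x + e * Dh x + e ^ 2 * (2 / c ^ 3)) 0 1).
  2:{ rewrite RInt_Rplus_scal_const; [unfold P0; in_R; ring | ..];
        apply ex_RInt_continuous_le; [lra | assumption | lra | assumption]. }
  apply RInt_le; [lra | | |].
  - apply ex_RInt_continuous_le; [lra |]. intros x Hx. destruct (Hpsi x Hx) as [Hcp Hp].
    apply continuous_P0_integrand; [exact Hx | exact Hcp | lra].
  - apply ex_RInt_continuous_le; [lra |]. intros x Hx.
    apply continuous_Rplus_comp; [apply continuous_Rplus_comp | apply continuous_Rconst].
    + apply Hphi0, Hx.
    + apply continuous_Rmult_comp; [apply continuous_Rconst | apply HDh, Hx].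
  - intros x Hx. destruct (Hphi x ltac:(lra)) as [_ H0]. destruct (Hpsi x ltac:(lra)) as [_ Hp].
    destruct (Hh x ltac:(lra)) as [_ Hb].
    pose proof (Rinv_perturbation_le c (phi0 x) (h x) e ltac:(lra) Hp Hb).
    unfold P0_integrand, Dh, psi in *. lra.
Qed.

Lemma first_variation_nonneg (phi0 h : R -> R) (c e0 : R) :
  0 < c -> (forall x, 0 <= x <= 1 -> continuous phi0 x /\ c <= phi0 x) ->
  (forall x, 0 <= x <= 1 -> continuous h x /\ Rabs (h x) <= 1) -> 0 < e0 ->
  (forall e, 0 < e < e0 -> P0 f phi0 <= P0 f (fun x => phi0 x + e * h x)) ->
  0 <= RInt (fun x => (Derive_n f 2 x - / phi0 x ^ 2) * h x) 0 1.
Proof.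
  intros Hc Hphi Hh He0 Hmin.
  apply (nonneg_of_small_perturbations _ (2 / c ^ 3) (Rmin e0 (c / 2))).
  - apply Rmin_glb_lt; lra.
  - intros e He.
    pose proof (Rmin_l e0 (c / 2)). pose proof (Rmin_r e0 (c / 2)).
    pose proof (Hmin e ltac:(lra)).
    pose proof (P0_perturbation_le phi0 h c e Hc Hphi Hh ltac:(lra)).
    lra.
Qed.

End FirstVariation.

Section TaylorAtZero.

Variable f : R -> R.
Hypothesis f_der : forall x, 0 <= x <= 1 -> ex_derive f x.
Hypothesis f1_der : forall x, 0 <= x <= 1 -> ex_derive (Derive f) x.
Hypothesis f2_cont : forall x, 0 <= x <= 1 -> continuous (Derive_n f 2) x.
Hypothesis f1_0 : Derive f 0 = 0.

Lemma RInt_Derive2 : RInt (Derive_n f 2) 0 1 = Derive f 1.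
Proof.
  change (RInt (Derive (Derive f)) 0 1 = Derive f 1).
  rewrite (RInt_Derive (Derive f) 0 1), f1_0; [apply Rminus_0_r | |];
    rewrite Rmin_left, Rmax_right by lra; assumption.
Qed.

Hypothesis f_0 : f 0 = 0.

Lemma RInt_Derive2_mul_1m : RInt (fun x => Derive_n f 2 x * (1 - x)) 0 1 = f 1.
Proof.
  apply is_RInt_unique.
  replace (f 1) with ((Derive f 1 * (1 - 1) + f 1) - (Derive f 0 * (1 - 0) + f 0))
    by (rewrite f1_0, f_0; ring).
  apply (is_RInt_derive (fun x => Derive f x * (1 - x) + f x)); intros x Hx;
    rewrite Rmin_left, Rmax_right in Hx by lra.
  - auto_derive; [split; [apply f1_der, Hx | split; [apply f_der, Hx | exact I]] |].
    change (1 * Derive_n f 2 x * (1 + - x) + Derive f x * - (1) + 1 * Derive f x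
      = Derive_n f 2 x * (1 - x)).
    ring.
  - apply (continuous_Rmult_comp (Derive_n f 2) (fun y => 1 - y) x (f2_cont x Hx)).
    apply continuous_Rminus_comp; [apply continuous_Rconst | apply (@continuous_id R_UniformSpace)].
Qed.

End TaylorAtZero.

Lemma continuous_inv_affine_sq (m c x : R) : 0 < m * (1 - x) + c ->
  continuous (fun y => / (m * (1 - y) + c) ^ 2) x.
Proof. intros H. apply (@ex_derive_continuous R_AbsRing R_NormedModule). auto_derive. apply Rgt_not_eq. nra. Qed.

Lemma RInt_inv_affine_sq (m c : R) : 0 < m -> 0 < c ->
  RInt (fun x => / (m * (1 - x) + c) ^ 2) 0 1 = / (c * (c + m)).
Proof.
  intros Hm Hc. apply is_RInt_unique.
  replace (/ (c * (c + m))) with (/ (m * (m * (1 - 1) + c)) - / (m * (m * (1 - 0) + c)))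
    by (field; lra).
  apply (is_RInt_derive (fun x => / (m * (m * (1 - x) + c)))); intros x Hx;
    rewrite Rmin_left, Rmax_right in Hx by lra.
  - auto_derive; [nra | field; nra].
  - apply continuous_inv_affine_sq. nra.
Qed.

Lemma RInt_1m_inv_affine_sq (m c : R) : 0 < m -> 0 < c ->
  RInt (fun x => (1 - x) * / (m * (1 - x) + c) ^ 2) 0 1
  = / m * (/ m * ln ((c + m) / c) - / (c + m)).
Proof.
  intros Hm Hc. apply is_RInt_unique.
  set (F := fun x => - / m ^ 2 * ln (m * (1 - x) + c) - c / m ^ 2 * / (m * (1 - x) + c)).
  replace (/ m * (/ m * ln ((c + m) / c) - / (c + m))) with (F 1 - F 0).
  2:{ unfold F. replace (m * (1 - 1) + c) with c by ring. replace (m * (1 - 0) + c) with (c + m) by ring.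
      rewrite ln_div by lra. field. lra. }
  apply (is_RInt_derive F); intros x Hx; rewrite Rmin_left, Rmax_right in Hx by lra.
  - unfold F. auto_derive; [repeat split; nra | field; nra].
  - apply continuous_Rmult_comp.
    + apply continuous_Rminus_comp; [apply continuous_Rconst | apply (@continuous_id R_UniformSpace)].
    + apply continuous_inv_affine_sq. nra.
Qed.

Lemma conj_eta_Derive2 (F phi : R -> R) (lo hi : R) : lo < 0 -> 1 < hi ->
  (forall x, lo < x < hi -> continuous phi x /\ phi x <> 0) ->
  forall t, lo < t < hi -> Derive_n (conj_eta F phi) 2 t = / phi t ^ 2.
Proof.
  intros Hlo Hhi Hphi t Ht.
  set (g := fun tau => / phi tau ^ 2).
  assert (Hg : forall x, lo < x < hi -> continuous g x).
  { intros x Hx. destruct (Hphi x Hx) as [Hc Hnz].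
    apply continuous_Rinv_comp; [| apply pow_nonzero, Hnz].
    apply continuous_Rmult_comp; [exact Hc |].
    apply continuous_Rmult_comp; [exact Hc | apply continuous_Rconst]. }
  set (G := RInt g 0).
  assert (HG : forall s, lo < s < hi -> is_derive G s (g s))
    by (apply is_derive_RInt_open_interval; [lra | exact Hg]).
  assert (HGc : forall s, lo < s < hi -> continuous G s)
    by (intros s Hs; apply (@ex_derive_continuous R_AbsRing R_NormedModule); exists (g s); apply HG, Hs).
  assert (Heta : forall s, lo < s < hi -> is_derive (conj_eta F phi) s (G s)).
  { intros s Hs.
    assert (Htail : is_derive (fun u => RInt G u 1) s (- G s)).
    { apply (is_derive_RInt' G (fun u => RInt G u 1) s 1); [| apply HGc, Hs].
      apply (filter_imp (fun y => lo < y < hi)); [| apply locally_open_interval, Hs].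
      intros y Hy. apply (@RInt_correct R_CompleteNormedModule).
      exact (ex_RInt_open_interval G lo hi y 1 HGc Hy ltac:(lra)). }
    unfold conj_eta. fold g.
    replace (G s) with (0 - - G s) by ring.
    apply (is_derive_minus (fun _ => F 1) (fun u => RInt G u 1)); [exact (@is_derive_const R_AbsRing R_NormedModule (F 1) s) | exact Htail]. }
  change (Derive (Derive (conj_eta F phi)) t = g t).
  rewrite (Derive_ext_loc _ G).
  - apply is_derive_unique, HG, Ht.
  - apply (filter_imp (fun y => lo < y < hi)); [| apply locally_open_interval, Ht].
    intros y Hy. apply is_derive_unique, Heta, Hy.
Qed.

Lemma conj_eta_affine_Derive2 (F : R -> R) (m c t : R) : 0 < m -> 0 < c -> 0 <= t <= 1 ->
  Derive_n (conj_eta F (fun t => m * (1 - t) + c)) 2 t = / (m * (1 - t) + c) ^ 2.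
Proof.
  intros Hm Hc Ht. assert (Hcm : 0 < c / m) by (apply Rdiv_lt_0_compat; lra).
  apply (conj_eta_Derive2 F (fun t => m * (1 - t) + c) (-1) (1 + c / m)); [lra | lra | | lra].
  intros x Hx. split.
  - apply (@ex_derive_continuous R_AbsRing R_NormedModule). auto_derive. exact I.
  - assert (m * x < m * (1 + c / m)) by (apply Rmult_lt_compat_l; lra).
    replace (m * (1 + c / m)) with (m + c) in * by (field; lra). lra.
Qed.

Lemma model_coef_nonneg (beta : nat -> R) (n : nat) : 0 <= model_coef beta n.
Proof. destruct n as [| [| n]]; simpl; [lra | lra | apply pow2_ge_0]. Qed.

Lemma CV_disk_le_radius (a : nat -> R) (x : R) : CV_disk a x -> Rbar_le x (CV_radius a).
Proof. intros H. unfold CV_radius. apply (proj1 (Lub_Rbar_correct (CV_disk a))). exact H. Qed.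

Lemma model_radius_gt_1 (beta : nat -> R) : is_model beta -> Rbar_lt 1 (CV_radius (model_coef beta)).
Proof.
  intros [_ [eps [Heps Hex]]].
  apply Rbar_lt_le_trans with (1 + eps); [simpl; lra |].
  apply CV_disk_le_radius. unfold CV_disk.
  apply (ex_series_ext (fun n => scal (pow_n (1 + eps) n) (model_coef beta n))); [| exact Hex].
  intros n. rewrite pow_n_pow. change ((1 + eps) ^ n * model_coef beta n = Rabs (model_coef beta n * (1 + eps) ^ n)).
  rewrite Rabs_pos_eq; [ring |]. apply Rmult_le_pos; [apply model_coef_nonneg | apply pow_le; lra].
Qed.

Lemma model_in_disk (beta : nat -> R) (x : R) : is_model beta -> 0 <= x <= 1 ->
  Rbar_lt (Rabs x) (CV_radius (model_coef beta)).
Proof.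
  intros H Hx. apply Rbar_le_lt_trans with 1; [simpl; rewrite Rabs_pos_eq; lra |].
  apply model_radius_gt_1, H.
Qed.

Lemma ex_derive_n_xi (beta : nat -> R) (n : nat) (x : R) : is_model beta -> 0 <= x <= 1 ->
  ex_derive_n (xi beta) n x.
Proof. intros H Hx. apply ex_derive_n_PSeries, model_in_disk; assumption. Qed.

Lemma continuous_Derive2_xi (beta : nat -> R) (x : R) : is_model beta -> 0 <= x <= 1 ->
  continuous (Derive_n (xi beta) 2) x.
Proof.
  intros H Hx. apply (@ex_derive_continuous R_AbsRing R_NormedModule).
  exact (ex_derive_n_xi beta 3 x H Hx).
Qed.

Lemma xi_0 (beta : nat -> R) : xi beta 0 = 0.
Proof. unfold xi. rewrite PSeries_0. reflexivity. Qed.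

Lemma Derive_xi_0 (beta : nat -> R) : is_model beta -> Derive (xi beta) 0 = 0.
Proof.
  intros H. change (Derive_n (xi beta) 1 0 = 0). unfold xi.
  rewrite Derive_n_coef; [simpl; ring |].
  rewrite <- Rabs_R0. apply model_in_disk; [exact H | lra].
Qed.

Section AffineMinimizer.

Variables (f : R -> R) (m c : R).
Hypothesis f2_cont : forall x, 0 <= x <= 1 -> continuous (Derive_n f 2) x.
Hypothesis Hm : 0 < m.
Hypothesis Hc : 0 < c.
Hypothesis P0_min :
  forall psi, admissible psi -> P0 f (fun x => m * (1 - x) + c) <= P0 f psi.

Let gradP (x : R) : R := Derive_n f 2 x - / (m * (1 - x) + c) ^ 2.

Lemma continuous_gradP (x : R) : 0 <= x <= 1 -> continuous gradP x.
Proof.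
  intros Hx. apply continuous_Rminus_comp; [apply f2_cont, Hx |].
  apply continuous_inv_affine_sq. nra.
Qed.

Lemma ex_RInt_gradP_mul (h : R -> R) :
  (forall x, 0 <= x <= 1 -> continuous h x) -> ex_RInt (fun x => gradP x * h x) 0 1.
Proof.
  intros Hh. apply ex_RInt_continuous_le; [lra |]. intros x Hx.
  apply continuous_Rmult_comp; [apply continuous_gradP, Hx | apply Hh, Hx].
Qed.

Lemma affine_first_variation (h : R -> R) (e0 : R) :
  (forall x, 0 <= x <= 1 -> continuous h x /\ Rabs (h x) <= 1) -> 0 < e0 ->
  (forall e, 0 < e < e0 -> admissible (fun x => m * (1 - x) + c + e * h x)) ->
  0 <= RInt (fun x => gradP x * h x) 0 1.
Proof.
  intros Hh He0 Hadm.
  apply (first_variation_nonneg f f2_cont (fun x => m * (1 - x) + c) h c e0 Hc);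
    [| exact Hh | exact He0 | intros e He; apply P0_min, Hadm, He].
  intros x Hx. split; [| nra].
  apply (@ex_derive_continuous R_AbsRing R_NormedModule). auto_derive. exact I.
Qed.

Lemma affine_first_variation_opp (h : R -> R) (e0 : R) :
  (forall x, 0 <= x <= 1 -> continuous h x /\ Rabs (h x) <= 1) -> 0 < e0 ->
  (forall e, 0 < e < e0 -> admissible (fun x => m * (1 - x) + c + e * - h x)) ->
  RInt (fun x => gradP x * h x) 0 1 <= 0.
Proof.
  intros Hh He0 Hadm.
  assert (Hopp : 0 <= RInt (fun x => gradP x * - h x) 0 1).
  { apply (affine_first_variation (fun x => - h x) e0); [| exact He0 |].
    - intros x Hx. destruct (Hh x Hx) as [Hch Hb]. rewrite Rabs_Ropp. split; [| exact Hb].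
      apply continuous_Ropp_comp, Hch.
    - exact Hadm. }
  rewrite (RInt_ext _ (fun x => - (gradP x * h x))) in Hopp by (intros; symmetry; apply Ropp_mult_distr_r).
  rewrite RInt_Ropp in Hopp; [lra |].
  apply ex_RInt_gradP_mul. apply Hh.
Qed.

Lemma RInt_gradP_eq_0 : RInt gradP 0 1 = 0.
Proof.
  assert (Hh : forall x, 0 <= x <= 1 -> continuous (fun _ => 1) x /\ Rabs 1 <= 1)
    by (intros; split; [apply continuous_Rconst | rewrite Rabs_R1; lra]).
  rewrite (RInt_ext gradP (fun x => gradP x * 1)) by (intros; symmetry; apply Rmult_1_r).
  apply Rle_antisym.
  - apply (affine_first_variation_opp (fun _ => 1) c Hh Hc).
    intros e He. apply (ramp_profile_admissible m (c - e) 0 0); try lra.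
    intros x. unfold ramp_profile. ring.
  - apply (affine_first_variation (fun _ => 1) c Hh Hc).
    intros e He. apply (ramp_profile_admissible m (c + e) 0 0); try lra.
    intros x. unfold ramp_profile. ring.
Qed.

Lemma RInt_gradP_mul_1m_eq_0 : RInt (fun x => gradP x * (1 - x)) 0 1 = 0.
Proof.
  assert (Hh : forall x, 0 <= x <= 1 -> continuous (fun y => 1 - y) x /\ Rabs (1 - x) <= 1).
  { intros x Hx. split; [| rewrite Rabs_pos_eq; lra].
    apply continuous_Rminus_comp; [apply continuous_Rconst | apply (@continuous_id R_UniformSpace)]. }
  apply Rle_antisym.
  - apply (affine_first_variation_opp (fun y => 1 - y) m Hh Hm).
    intros e He. apply (ramp_profile_admissible (m - e) c 0 0); try lra.
    intros x. unfold ramp_profile. ring.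
  - apply (affine_first_variation (fun y => 1 - y) m Hh Hm).
    intros e He. apply (ramp_profile_admissible (m + e) c 0 0); try lra.
    intros x. unfold ramp_profile. ring.
Qed.

Lemma RInt_gradP_mul_ramp_nonpos (a : R) : 0 <= a <= 1 ->
  RInt (fun x => gradP x * ramp a x) 0 1 <= 0.
Proof.
  intros Ha. apply (affine_first_variation_opp (ramp a) c); [| exact Hc |].
  - intros x Hx. split; [apply continuous_ramp |].
    rewrite Rabs_pos_eq by apply ramp_nonneg. apply Rmax_lub; lra.
  - intros e He. apply (ramp_profile_admissible m c e a); try lra; [nra |].
    intros x. unfold ramp_profile. ring.
Qed.

Lemma RInt_gradP_mul_ramp_left_nonpos (a : R) : 0 <= a <= 1 ->
  RInt (fun x => gradP x * ramp_left a x) 0 1 <= 0.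
Proof.
  intros Ha. apply (affine_first_variation_opp (ramp_left a) m); [| exact Hm |].
  - intros x Hx. split; [apply continuous_ramp_left |].
    rewrite Rabs_pos_eq by apply Rmax_l. apply Rmax_lub; lra.
  - intros e He. apply (ramp_profile_admissible (m - e) (c + e * (1 - a)) e a); try lra.
    intros x. rewrite ramp_left_eq. unfold ramp_profile. ring.
Qed.

Lemma affine_minimizer_Derive2_1 : Derive_n f 2 1 <= / c ^ 2.
Proof.
  enough (H : gradP 1 <= 0) by (unfold gradP in H; replace (m * (1 - 1) + c) with c in H by ring; lra).
  apply nonpos_at_1_of_ramp_moments;
    [apply continuous_gradP | apply RInt_gradP_mul_ramp_nonpos].
Qed.

Lemma affine_minimizer_Derive2_0 : Derive_n f 2 0 <= / (m + c) ^ 2.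
Proof.
  enough (H : gradP 0 <= 0) by (unfold gradP in H; replace (m * (1 - 0) + c) with (m + c) in H by ring; lra).
  apply nonpos_at_0_of_ramp_moments;
    [apply continuous_gradP | apply RInt_gradP_mul_ramp_left_nonpos].
Qed.

Lemma affine_minimizer_RInt_Derive2 : RInt (Derive_n f 2) 0 1 = / (c * (c + m)).
Proof.
  rewrite <- (RInt_inv_affine_sq m c Hm Hc).
  apply Rminus_diag_uniq. rewrite <- RInt_Rminus.
  - exact RInt_gradP_eq_0.
  - apply ex_RInt_continuous_le; [lra | exact f2_cont].
  - apply ex_RInt_continuous_le; [lra |]. intros x Hx. apply continuous_inv_affine_sq. nra.
Qed.

Lemma affine_minimizer_RInt_Derive2_mul_1m :
  RInt (fun x => Derive_n f 2 x * (1 - x)) 0 1 = / m * (/ m * ln ((c + m) / c) - / (c + m)).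
Proof.
  rewrite <- (RInt_1m_inv_affine_sq m c Hm Hc).
  apply Rminus_diag_uniq. rewrite <- RInt_Rminus.
  - rewrite <- RInt_gradP_mul_1m_eq_0 at 2. apply RInt_ext. intros x _. unfold gradP. in_R. ring.
  - apply ex_RInt_continuous_le; [lra |]. intros x Hx.
    apply continuous_Rmult_comp; [apply f2_cont, Hx |].
    apply continuous_Rminus_comp; [apply continuous_Rconst | apply (@continuous_id R_UniformSpace)].
  - apply ex_RInt_continuous_le; [lra |]. intros x Hx.
    apply continuous_Rmult_comp; [| apply continuous_inv_affine_sq; nra].
    apply continuous_Rminus_comp; [apply continuous_Rconst | apply (@continuous_id R_UniformSpace)].
Qed.

End AffineMinimizer.

Theorem corollary1p23 (beta : nat -> R) (phi : R -> R) (m c : R) :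
  is_model beta ->
  0 < m -> 0 < c ->
  is_minimizer (xi beta) phi ->
  (forall t, 0 <= t <= 1 -> phi t = m * (1 - t) + c) ->
  let eta := conj_eta (xi beta) (fun t => m * (1 - t) + c) in
  (xi beta 1 = / m * (/ m * ln ((c + m) / c) - / (c + m)) /\
   / Derive (xi beta) 1 = c * (c + m)) /\
  Derive_n eta 2 1 >= Derive_n (xi beta) 2 1 /\
  Derive_n eta 2 0 >= Derive_n (xi beta) 2 0.
Proof.
  intros Hmodel Hm Hc Hmin Hphi eta.
  assert (Hf2 : forall x, 0 <= x <= 1 -> continuous (Derive_n (xi beta) 2) x)
    by (intros x; apply continuous_Derive2_xi, Hmodel).
  assert (P0_min : forall psi, admissible psi ->
            P0 (xi beta) (fun x => m * (1 - x) + c) <= P0 (xi beta) psi).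
  { apply (minimizer_P0_le _ Hf2 phi); [exact Hmin | exact Hphi |].
    apply (ramp_profile_admissible m c 0 0); try lra.
    intros x. unfold ramp_profile. ring. }
  assert (Hf : forall x, 0 <= x <= 1 -> ex_derive (xi beta) x)
    by exact (fun x => ex_derive_n_xi beta 1 x Hmodel).
  assert (Hf1 : forall x, 0 <= x <= 1 -> ex_derive (Derive (xi beta)) x)
    by exact (fun x => ex_derive_n_xi beta 2 x Hmodel).
  split; [split |].
  - rewrite <- (RInt_Derive2_mul_1m _ Hf Hf1 Hf2 (Derive_xi_0 beta Hmodel) (xi_0 beta)).
    exact (affine_minimizer_RInt_Derive2_mul_1m _ m c Hf2 Hm Hc P0_min).
  - rewrite <- (RInt_Derive2 _ Hf1 Hf2 (Derive_xi_0 beta Hmodel)).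
    rewrite (affine_minimizer_RInt_Derive2 _ m c Hf2 Hm Hc P0_min). apply Rinv_inv.
  - unfold eta. rewrite !conj_eta_affine_Derive2 by lra. split; apply Rle_ge.
    + replace (m * (1 - 1) + c) with c by ring.
      exact (affine_minimizer_Derive2_1 _ m c Hf2 Hm Hc P0_min).
    + replace (m * (1 - 0) + c) with (m + c) by ring.
      exact (affine_minimizer_Derive2_0 _ m c Hf2 Hm Hc P0_min).
Qed.
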